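(* Let $n$ be a positive integer and let $\varphi(n)$ denote the minimum of all sums $r_1+s_1+s_2+\dots+s_t$, taken over all $t\in\mathbb N$ and all positive integers $r_1,\dots,r_t,s_1,\dots,s_t$ such that $n=\sum_{i=1}^t r_is_i$ and $r_1>r_2>\dots>r_t$ (the last condition being vacuous for $t=1$). Then: (i) there is a uniquely determined positive integer $k$ such that $k^2-k+1\le n\le k^2+k$; (ii) if $n\le k^2$ then $\varphi(n)=2k$; (iii) if $k^2+1\le n$ then $\varphi(n)=2k+1$.
   Context: $\mathbb N$ denotes the set of positive integers. No ordering condition is imposed on the $s_i$. *)

From mathcomp Require Import all_boot.
Set Implicit Arguments. Unset Strict Implicit. Unset Printing Implicit Defensive.

Definition is_rep (n : nat) (r s : seq nat) : Prop :=
  0 < size r /\ size r = size s /\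
  all (fun x => 0 < x) r /\ all (fun x => 0 < x) s /\
  sorted (fun a b => b < a) r /\
  n = sumn [seq p.1 * p.2 | p <- zip r s].

Definition rep_cost (r s : seq nat) : nat := head 0 r + sumn s.

Definition achievable (n m : nat) : Prop :=
  exists r s, is_rep n r s /\ rep_cost r s = m.

Definition phi_is (n m : nat) : Prop :=
  achievable n m /\ forall m', achievable n m' -> m <= m'.

(* Every cost-c representation satisfies n <= r_1 (s_1 + ... + s_t), so by AM-GM
   4n <= c^2; this forces c >= 2k when n > k^2 - k and c >= 2k + 1 when n > k^2.
   Conversely n = k (k - 1) + d or n = k^2 + d with 0 < d <= k is realised with
   r = (k, d), s = (k - 1, 1) resp. (k, 1), or with a single term when d = k. *)
From mathcomp Require Import all_boot.
From mathcomp Require Import zify.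

Set Implicit Arguments.
Unset Strict Implicit.

Lemma sumn_zip_mul_le (m : nat) (r s : seq nat) :
  all (fun x => x <= m) r -> sumn [seq p.1 * p.2 | p <- zip r s] <= m * sumn s.
Proof.
elim: r s => [|x r IHr] [|y s] //= /andP[le_xm le_rm].
by rewrite mulnDr leq_add ?leq_mul ?IHr.
Qed.

Lemma sorted_gtn_le_head (r : seq nat) :
  sorted (fun a b => b < a) r -> all (fun x => x <= head 0 r) r.
Proof.
case: r => [|x r] //= r_path; rewrite leqnn /=.
have gt_trans : transitive (fun a b : nat => b < a).
  by move=> y a b lt_ya lt_by; exact: ltn_trans lt_by lt_ya.
by apply: sub_all (order_path_min gt_trans r_path) => y /ltnW.
Qed.

Lemma is_rep_le_head_mul (n : nat) (r s : seq nat) :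
  is_rep n r s -> n <= head 0 r * sumn s.
Proof.
move=> [_ [_ [_ [_ [r_sorted ->]]]]].
exact/sumn_zip_mul_le/sorted_gtn_le_head.
Qed.

Lemma achievable_sqr (n c : nat) : achievable n c -> 4 * n <= c ^ 2.
Proof.
move=> [r [s [rep_rs <-]]]; rewrite /rep_cost.
apply: leq_trans (nat_AGM2 _ _); rewrite leq_mul2l.
exact: is_rep_le_head_mul.
Qed.

Lemma achievable_mul (a b : nat) : 0 < a -> 0 < b -> achievable (a * b) (a + b).
Proof.
move=> a_gt0 b_gt0; exists [:: a], [:: b]; split; last by rewrite /rep_cost /= addn0.
by do !split=> //=; rewrite ?a_gt0 ?b_gt0 ?muln0 ?addn0.
Qed.

Lemma achievable_mul_add (a b c : nat) :
  0 < b -> 0 < c < a -> achievable (a * b + c) (a + b + 1).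
Proof.
move=> b_gt0 /andP[c_gt0 lt_ca].
exists [:: a; c], [:: b; 1]; split; last by rewrite /rep_cost /= addn0 addnA.
have a_gt0 : 0 < a by exact: ltn_trans lt_ca.
by do !split=> //=; rewrite ?a_gt0 ?b_gt0 ?c_gt0 ?lt_ca ?muln1 ?addn0.
Qed.

Lemma sqr_window_unique (n j k : nat) :
  k ^ 2 - k + 1 <= n <= k ^ 2 + k -> j ^ 2 - j + 1 <= n <= j ^ 2 + j -> j = k.
Proof.
wlog lt_jk : j k / j < k.
  move=> hwlog wk wj; case: (ltngtP j k) => [lt_jk|lt_kj|] //.
  - exact: hwlog.
  - exact/esym/hwlog.
move=> /andP[lo_k _] /andP[_ hi_j]; exfalso.
have : j ^ 2 + j < k ^ 2 - k + 1 by nia.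
by rewrite ltnNge (leq_trans lo_k hi_j).
Qed.

Lemma sqr_window_exists (n : nat) :
  0 < n -> exists2 k, 0 < k & k ^ 2 - k + 1 <= n <= k ^ 2 + k.
Proof.
move=> n_gt0; have ex_k : exists k, n <= k ^ 2 + k by exists n; nia.
case: (ex_minnP ex_k) => k hi_k min_k.
have k_gt0 : 0 < k by nia.
exists k => //; rewrite hi_k andbT leqNgt; apply/negP => lo_k.
by have := min_k k.-1 ltac:(nia); lia.
Qed.

Theorem theorem8p1 (n : nat) (hn : 0 < n) :
  (exists! k : nat, 0 < k /\ (k ^ 2 - k + 1 <= n <= k ^ 2 + k)) /\
  (forall k : nat, 0 < k -> k ^ 2 - k + 1 <= n <= k ^ 2 + k ->
     (n <= k ^ 2 -> phi_is n (2 * k)) /\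
     (k ^ 2 + 1 <= n -> phi_is n (2 * k + 1))).
Proof.
split.
  have [k k_gt0 win_k] := sqr_window_exists hn.
  by exists k; split=> // j [_ win_j]; exact: sqr_window_unique win_j win_k.
move=> k k_gt0 /andP[lo_n hi_n]; split=> hn_k.
- split=> [|c /achievable_sqr ub_c]; last by nia.
  have [-> | lt_nk] := eqVneq n (k ^ 2).
    by rewrite mul2n -addnn -mulnn; exact: achievable_mul.
  have -> : n = k * (k - 1) + (n - k * (k - 1)) by nia.
  have -> : 2 * k = k + (k - 1) + 1 by lia.
  by apply: achievable_mul_add; [lia | apply/andP; nia].
- split=> [|c /achievable_sqr ub_c]; last by nia.
  have [-> | lt_nk] := eqVneq n (k ^ 2 + k).
    by rewrite -mulnn -mulnSr mul2n -addnn -addnA addn1; exact: achievable_mul.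
  have -> : n = k * k + (n - k * k) by nia.
  have -> : 2 * k + 1 = k + k + 1 by lia.
  by apply: achievable_mul_add => //; apply/andP; nia.
Qed.
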